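(* Let $r\sim\mathcal N(\mu,\Sigma)$ be a multivariate Gaussian indexed by a finite set, with standard deviations $\sigma_{r_x}=\sqrt{\Sigma_{xx}}\le1$ for all $x$. Let $L_T=(x_t)_{t=1}^T$ be a sequence of evaluation locations with observations $y_t=r_{x_t}+\eta_t$, where the noises $\eta_t\sim\mathcal N(0,\sigma_{x_t}^2)$ are independent (and independent of $r$) with $\sigma_x\le\sigma$ for all $x$. For $t=1,\dots,T$ let $\sigma^2_{r^t_{x_t}}$ denote the posterior variance of $r_{x_t}$ given $y_1,\dots,y_t$. Then $$\gamma_T:=\max_{L_T}I(y_{1:T}(L_T);r)\ \ge\ I(y_{1:T};r)\ \ge\ \frac{\ln(1+\sigma^{-2})}{2}\sum_{t=1}^T\sigma^2_{r^t_{x_t}}.$$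
   Context: $I(\cdot;\cdot)$ denotes mutual information; $y_{1:T}(L_T)$ denotes the observations obtained at locations $L_T$, and the maximum is over all sequences of $T$ locations. The constant $C_\sigma:=2/\ln(1+\sigma^{-2})$ is the reciprocal of the factor in the bound. *)

From mathcomp Require Import all_boot all_order all_algebra.
From mathcomp Require Import all_classical all_reals all_analysis.
Set Implicit Arguments. Unset Strict Implicit. Unset Printing Implicit Defensive.
Import Order.TTheory GRing.Theory Num.Theory.
Local Open Scope ring_scope.

(* The Gaussian r ~ N(mu, Sigma) is indexed by the finite set 'I_n;
   locations are maps L : 'I_k -> 'I_n; noise std. dev. s : 'I_n -> R. *)

Definition selmx (R : realType) (n k : nat) (L : 'I_k -> 'I_n) : 'M[R]_(k, n) :=
  \matrix_(t < k, j < n) (L t == j)%:R.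

Definition noisemx (R : realType) (n k : nat) (s : 'I_n -> R) (L : 'I_k -> 'I_n)
  : 'M[R]_k := diag_mx (\row_(t < k) (s (L t)) ^+ 2).

(* Mutual information I(y_{1:k}; r) for y = S r + eta, r ~ N(mu,Sigma),
   eta ~ N(0,D) independent of r:  (ln det(S Sigma S^T + D) - ln det D)/2,
   i.e. h(y) - h(y | r) for jointly Gaussian variables (in nats). *)
Definition gaussMI (R : realType) (n k : nat) (Sigma : 'M[R]_n)
  (s : 'I_n -> R) (L : 'I_k -> 'I_n) : R :=
  (ln (\det (selmx R L *m Sigma *m (selmx R L)^T + noisemx s L))
   - ln (\det (noisemx s L))) / 2.

Definition gammaT (R : realType) (n T : nat) (Sigma : 'M[R]_n)
  (s : 'I_n -> R) : R :=
  \big[Num.max/0]_(L : {ffun 'I_T -> 'I_n}) gaussMI Sigma s L.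

Definition postcov (R : realType) (n k : nat) (Sigma : 'M[R]_n)
  (S : 'M[R]_(k, n)) (D : 'M[R]_k) : 'M[R]_n :=
  Sigma - Sigma *m S^T *m invmx (S *m Sigma *m S^T + D) *m S *m Sigma.

Lemma pref_proof (T : nat) (t : 'I_T) (i : 'I_((nat_of_ord t).+1)) : (i < T)%N.
Proof. have Hi : (i <= t)%N := ltnSE (ltn_ord i). exact: leq_ltn_trans Hi (ltn_ord t). Qed.
Definition pref (T : nat) (t : 'I_T) (i : 'I_((nat_of_ord t).+1)) : 'I_T :=
  Ordinal (@pref_proof T t i).

(* sigma^2_{r^t_{x_t}}: posterior variance of r_{x_t} given y_1..y_t
   (t is 0-indexed here, so the prefix has t.+1 observations) *)
Definition postvar (R : realType) (n T : nat) (Sigma : 'M[R]_n)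
  (s : 'I_n -> R) (L : 'I_T -> 'I_n) (t : 'I_T) : R :=
  postcov Sigma (selmx R (fun i => L (@pref T t i)))
                (noisemx s (fun i => L (@pref T t i))) (L t) (L t).

From mathcomp Require Import all_boot all_order all_algebra.
From mathcomp Require Import all_classical all_reals all_analysis.
Set Implicit Arguments. Unset Strict Implicit. Unset Printing Implicit Defensive.
Import Order.TTheory GRing.Theory Num.Theory.
Local Open Scope ring_scope.

(* With the information matrix G = S^T D^-1 S, Sylvester's identity gives
   I(y;r) = ln det (1 + Sigma G) / 2.  Adding the observation at x = x_t adds
   the rank-one term d e_x e_x^T to G, with d = sigma_x^-2.  By the matrix
   determinant lemma det (1 + Sigma G) gets multiplied by 1 + d a, where a is
   the variance of r_x before the step, and by Sherman-Morrison the variance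
   after the step is p = a / (1 + d a). *)

Lemma det1D_mulmxC (R : comNzRingType) k n
    (X : 'M[R]_(k, n)) (Y : 'M[R]_(n, k)) :
  \det (1%:M + X *m Y) = \det (1%:M + Y *m X).
Proof.
pose N := block_mx (1%:M : 'M[R]_k) (- X) Y (1%:M : 'M[R]_n).
pose U := block_mx (1%:M : 'M[R]_k) X 0 (1%:M : 'M[R]_n).
have detU : \det U = 1 by rewrite det_ublock !det1 mulr1.
have NU : N *m U = block_mx 1%:M 0 Y (1%:M + Y *m X).
  by rewrite mulmx_block !mulmx1 !mul1mx !mulmx0 !addr0 subrr addrC.
have UN : U *m N = block_mx (1%:M + X *m Y) 0 Y 1%:M.
  by rewrite mulmx_block !mulmx1 !mul1mx !mul0mx !add0r addNr.
have := congr1 determinant NU; have := congr1 determinant UN.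
by rewrite !det_mulmx !det_lblock !det1 detU mul1r mulr1 mulrC => ->.
Qed.

Section RankOneUpdate.
Variables (R : comUnitRingType) (n : nat) (B A : 'M[R]_n) (d : R) (x : 'I_n).
Hypothesis B_unit : B \in unitmx.

Let C := invmx B *m A.
Let u : 'cV[R]_n := C *m (d *: delta_mx x 0).

Lemma rank_one_updateE :
  B + A *m (d *: delta_mx x x) = B *m (1%:M + u *m delta_mx 0 x).
Proof.
rewrite mulmxDr mulmx1 /u /C !mulmxA mulmxV // mul1mx -!mulmxA.
by rewrite -scalemxAl mul_delta_mx.
Qed.

Lemma det_rank_one_update :
  \det (B + A *m (d *: delta_mx x x)) = \det B * (1 + d * C x x).
Proof.
rewrite rank_one_updateE det_mulmx det1D_mulmxC det_mx11 mxE.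
by rewrite -rowE /u -scalemxAr -colE !mxE eqxx mulr1n mulrC.
Qed.

Lemma rank_one_update_diag :
  B + A *m (d *: delta_mx x x) \in unitmx ->
  (invmx (B + A *m (d *: delta_mx x x)) *m A) x x * (1 + d * C x x) = C x x.
Proof.
set B' := B + A *m _ => B'_unit; set C' := invmx B' *m A.
have C'E : (1%:M + u *m delta_mx 0 x) *m C' = C.
  apply: (can_inj (mulKmx B_unit)).
  by rewrite mulmxA -rank_one_updateE /C' /C !mulmxA !mulmxV // !mul1mx.
have := congr1 (fun M : 'M[R]_n => M x x) C'E.
rewrite /u; clear C'E u; clearbody C' C.
rewrite mulmxDl mul1mx mxE -mulmxA -rowE -scalemxAr -colE.
rewrite [in X in _ + X = _]mxE big_ord1 !mxE => C'xxE.
by rewrite -[RHS]C'xxE mulrDr mulr1 [C' x x * _]mulrC.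
Qed.

End RankOneUpdate.

Definition psdmx (R : numDomainType) n (A : 'M[R]_n) : Prop :=
  forall v : 'rV[R]_n, 0 <= (v *m A *m v^T) 0 0.

Section PositiveSemidefinite.
Variables (R : realFieldType) (n : nat).
Implicit Types (A G Sigma : 'M[R]_n) (x : 'I_n).

Lemma psdmx_diag_ge0 A x : psdmx A -> 0 <= A x x.
Proof. by move=> /(_ (delta_mx 0 x)); rewrite -rowE trmx_delta -colE !mxE. Qed.

Lemma psdmx0 : psdmx (0 : 'M[R]_n).
Proof. by move=> v; rewrite mulmx0 mul0mx mxE. Qed.

Lemma psdmxD A G : psdmx A -> psdmx G -> psdmx (A + G).
Proof. by move=> psdA psdG v; rewrite mulmxDr mulmxDl mxE addr_ge0. Qed.

Lemma psdmx_scale_delta (a : R) x : 0 <= a -> psdmx (a *: delta_mx x x).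
Proof.
move=> a_ge0 v; rewrite -(mul_delta_mx (0 : 'I_1)) -scalemxAr -scalemxAl mxE.
rewrite mulmxA -colE -mulmxA -rowE mxE big_ord1 !mxE.
by rewrite mulr_ge0 // -expr2 sqr_ge0.
Qed.

Lemma psdmx_tr A : psdmx A -> psdmx A^T.
Proof.
move=> psdA v; have -> : v *m A^T *m v^T = (v *m A *m v^T)^T.
  by rewrite !trmx_mul trmxK mulmxA.
by rewrite mxE.
Qed.

(* Writing v = q (1 + Sigma G), the form becomes q Sigma q^T + w G^T w^T
   with w = q Sigma. *)
Lemma psdmx_posterior Sigma G :
  Sigma^T = Sigma -> psdmx Sigma -> psdmx G ->
  1%:M + Sigma *m G \in unitmx -> psdmx (invmx (1%:M + Sigma *m G) *m Sigma).
Proof.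
move=> Sigma_sym psdSigma psdG B_unit v.
set q := v *m invmx (1%:M + Sigma *m G).
have vE : v = q *m (1%:M + Sigma *m G) by rewrite /q -mulmxA mulVmx // mulmx1.
rewrite mulmxA -/q {1}vE trmx_mul raddfD /= trmx1 trmx_mul Sigma_sym.
rewrite mulmxDl mul1mx mulmxDr mxE addr_ge0 //.
clearbody q; set w := q *m Sigma.
have wT : Sigma *m q^T = w^T by rewrite /w trmx_mul Sigma_sym.
rewrite -(mulmxA G^T) wT mulmxA; clearbody w.
exact: psdmx_tr.
Qed.

End PositiveSemidefinite.

Lemma ln1D_ge_div (R : realType) (u : R) : 0 <= u -> u / (1 + u) <= ln (1 + u).
Proof.
move=> u_ge0; have Du_gt0 : 0 < 1 + u by rewrite ltr_wpDr.
have Du_neq0 := lt0r_neq0 Du_gt0.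
have -> : u / (1 + u) = - ((1 + u)^-1 - 1).
  apply: (mulIf Du_neq0); rewrite mulNr mulrBl mulVf // mul1r mulfVK //.
  by rewrite opprB [1 + u]addrC addrK.
rewrite lerNl -lnV ?posrE //.
have := @le_ln1Dx R ((1 + u)^-1 - 1); rewrite subrKC; apply.
by rewrite ltrBrDr addNr invr_gt0.
Qed.

Section ObservationModel.
Variables (R : realType) (n k : nat) (Sigma : 'M[R]_n) (s : 'I_n -> R).
Variable L : 'I_k -> 'I_n.
Hypothesis s_gt0 : forall x, 0 < s x.

Definition infomx : 'M[R]_n :=
  \sum_(t < k) (s (L t))^-2 *: delta_mx (L t) (L t).

Let S := selmx R L.
Let D := noisemx s L.
Let Dinv : 'M[R]_k := diag_mx (\row_(t < k) (s (L t))^-2).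

Lemma noisemx_mulV : D *m Dinv = 1%:M.
Proof.
apply/matrixP => i j; rewrite mul_diag_mx !mxE.
case: eqP => [->|_]; last by rewrite !mulr0.
by rewrite !mulr1n mulfV // expf_neq0 // lt0r_neq0.
Qed.

Lemma det_noisemx_gt0 : 0 < \det D.
Proof.
by rewrite det_diag; apply: prodr_gt0 => i _; rewrite mxE exprn_gt0.
Qed.

Lemma tr_selmx_mul_diag : S^T *m Dinv *m S = infomx.
Proof.
apply/matrixP => i j; rewrite mul_mx_diag summxE !mxE.
apply: eq_bigr => t _; rewrite !mxE [i == _]eq_sym [j == _]eq_sym.
by case: (L t == i); case: (L t == j); rewrite /= ?mulr1 ?mul0r ?mulr0 ?mul1r.
Qed.

Lemma det_obs_cov :
  \det (S *m Sigma *m S^T + D) = \det D * \det (1%:M + Sigma *m infomx).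
Proof.
have -> : S *m Sigma *m S^T + D = D *m (1%:M + (Dinv *m S) *m (Sigma *m S^T)).
  by rewrite mulmxDr mulmx1 !mulmxA noisemx_mulV mul1mx addrC.
by rewrite det_mulmx det1D_mulmxC -tr_selmx_mul_diag !mulmxA.
Qed.

Lemma gaussMIE : 0 < \det (1%:M + Sigma *m infomx) ->
  gaussMI Sigma s L = ln (\det (1%:M + Sigma *m infomx)) / 2.
Proof.
move=> det_gt0; rewrite /gaussMI det_obs_cov lnM ?posrE ?det_noisemx_gt0 //.
by rewrite addrAC subrr add0r.
Qed.

Lemma postcovE : 1%:M + Sigma *m infomx \in unitmx ->
  postcov Sigma S D = invmx (1%:M + Sigma *m infomx) *m Sigma.
Proof.
set B := 1%:M + _ => B_unit; set A := S *m Sigma *m S^T + D.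
have A_unit : A \in unitmx.
  rewrite unitmxE det_obs_cov unitrM -(unitmxE B) B_unit andbT unitfE.
  exact: lt0r_neq0 det_noisemx_gt0.
have BSigmaS : B *m (Sigma *m S^T) = Sigma *m S^T *m Dinv *m A.
  rewrite /A /B -tr_selmx_mul_diag !mulmxDr !mulmxDl !mul1mx -!mulmxA.
  by rewrite (mulmx1C noisemx_mulV) mulmx1 addrC.
apply: (canRL (mulKmx B_unit)).
rewrite /postcov -/A mulmxBr !mulmxA -(mulmxA B Sigma) BSigmaS.
rewrite -(mulmxA _ A) mulmxV // mulmx1 /B mulmxDl mul1mx.
by rewrite -tr_selmx_mul_diag !mulmxA addrK.
Qed.

End ObservationModel.

Lemma gaussMI_le_gammaT (R : realType) (n T : nat) (Sigma : 'M[R]_n)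
    (s : 'I_n -> R) (L : 'I_T -> 'I_n) :
  gaussMI Sigma s L <= gammaT T Sigma s.
Proof.
have -> : gaussMI Sigma s L = gaussMI Sigma s (finfun L).
  rewrite /gaussMI; have -> : selmx R L = selmx R (finfun L).
    by apply/matrixP => i j; rewrite !mxE ffunE.
  suff -> : noisemx s L = noisemx s (finfun L) by [].
  by apply/matrixP => i j; rewrite !mxE !ffunE.
exact: le_bigmax_seq (mem_index_enum _) _.
Qed.

Section SequentialObservations.
Variables (R : realType) (n T : nat) (Sigma : 'M[R]_n) (s : 'I_n -> R).
Variable L : 'I_T -> 'I_n.
Hypothesis Sigma_sym : Sigma^T = Sigma.
Hypothesis Sigma_psd : psdmx Sigma.
Hypothesis s_gt0 : forall x, 0 < s x.

Definition info_upto (m : nat) : 'M[R]_n :=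
  \sum_(t < T | (t < m)%N) (s (L t))^-2 *: delta_mx (L t) (L t).

Let B m := 1%:M + Sigma *m info_upto m.

Lemma info_upto0 : info_upto 0 = 0.
Proof. exact: big_pred0. Qed.

Lemma info_uptoS (t : 'I_T) :
  info_upto t.+1 = info_upto t + (s (L t))^-2 *: delta_mx (L t) (L t).
Proof.
rewrite /info_upto (bigD1 t) //= addrC; congr (_ + _); apply: eq_bigl => i.
by rewrite ltnS [(i < t)%N]ltn_neqAle andbC.
Qed.

Lemma info_upto_psd m : psdmx (info_upto m).
Proof.
apply: big_ind => [|A G|t _]; [exact: psdmx0 | exact: psdmxD |].
by apply: psdmx_scale_delta; rewrite invr_ge0 exprn_ge0 // ltW.
Qed.

Lemma infomx_pref (t : 'I_T) :
  infomx s (fun i => L (@pref T t i)) = info_upto t.+1.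
Proof.
rewrite /info_upto (big_ord_narrow (ltn_ord t)); apply: eq_bigr => i _.
by have -> : @pref T t i = widen_ord (ltn_ord t) i by apply: val_inj.
Qed.

Lemma infomx_full : infomx s L = info_upto T.
Proof. by apply: eq_bigl => i; rewrite ltn_ord. Qed.

Lemma postvarE (t : 'I_T) : B t.+1 \in unitmx ->
  postvar Sigma s L t = (invmx (B t.+1) *m Sigma) (L t) (L t).
Proof. by move=> B_unit; rewrite /postvar postcovE // (infomx_pref t). Qed.

Lemma ln_det_step (c : R) (t : 'I_T) :
  c <= (s (L t))^-2 -> 0 < \det (B t) ->
  0 < \det (B t.+1) /\
  ln (\det (B t)) + c * postvar Sigma s L t <= ln (\det (B t.+1)).
Proof.
move=> c_le det_gt0; set d := (s (L t))^-2 in c_le.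
have B_unit : B t \in unitmx by rewrite unitmxE unitfE lt0r_neq0.
set a := (invmx (B t) *m Sigma) (L t) (L t).
have a_ge0 : 0 <= a.
  by apply/psdmx_diag_ge0/psdmx_posterior => //; apply: info_upto_psd.
have d_gt0 : 0 < d by rewrite invr_gt0 exprn_gt0.
have da_ge0 : 0 <= d * a by rewrite mulr_ge0 // ltW.
have Dda_gt0 : 0 < 1 + d * a by rewrite ltr_wpDr.
have BS : B t.+1 = B t + Sigma *m (d *: delta_mx (L t) (L t)).
  by rewrite /B info_uptoS mulmxDr addrA.
have detBS : \det (B t.+1) = \det (B t) * (1 + d * a).
  by rewrite BS det_rank_one_update.
have detBS_gt0 : 0 < \det (B t.+1) by rewrite detBS mulr_gt0.
have BS_unit : B t.+1 \in unitmx by rewrite unitmxE unitfE lt0r_neq0.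
split=> //; rewrite detBS lnM ?posrE // lerD2l postvarE //.
set p := (invmx _ *m Sigma) _ _.
have pE : p = a / (1 + d * a).
  apply: (mulIf (lt0r_neq0 Dda_gt0)); rewrite mulfVK ?lt0r_neq0 //.
  by rewrite /p BS rank_one_update_diag // -BS.
apply: le_trans (ln1D_ge_div da_ge0).
by rewrite -mulrA -pE ler_wpM2r // pE divr_ge0 // ltW.
Qed.

Lemma ln_det_ge_sum_postvar (c : R) : (forall x, c <= (s x)^-2) ->
  forall m, (m <= T)%N -> 0 < \det (B m) /\
    c * \sum_(t < T | (t < m)%N) postvar Sigma s L t <= ln (\det (B m)).
Proof.
move=> c_le; elim=> [_|m IH m_lt].
  rewrite /B info_upto0 mulmx0 addr0 det1 ln1 big_pred0 // mulr0.
  by split=> //; apply: ltr01.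
have [det_gt0 sum_le] := IH (ltnW m_lt).
have [detS_gt0 step_le] := ln_det_step (t := Ordinal m_lt) (c_le _) det_gt0.
split=> //; apply: le_trans step_le.
rewrite (bigD1 (Ordinal m_lt)) //= mulrDr addrC lerD2r.
rewrite (eq_bigl (fun t : 'I_T => (t < m)%N)) // => i.
by rewrite ltnS [(i < m)%N]ltn_neqAle andbC.
Qed.

End SequentialObservations.

Theorem lemmaD2 (R : realType) (n T : nat) (mu : 'rV[R]_n) (Sigma : 'M[R]_n)
  (s : 'I_n -> R) (sigma : R) (L : 'I_T -> 'I_n) :
  Sigma^T = Sigma ->
  (forall v : 'rV[R]_n, 0 <= (v *m Sigma *m v^T) 0 0) ->
  (forall x : 'I_n, Sigma x x <= 1) ->
  0 < sigma ->
  (forall x : 'I_n, 0 < s x /\ s x <= sigma) ->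
  gaussMI Sigma s L <= gammaT T Sigma s /\
  ln (1 + sigma ^- 2) / 2 * \sum_(t < T) postvar Sigma s L t
    <= gaussMI Sigma s L.
Proof.
move=> Sigma_sym Sigma_psd _ sigma_gt0 s_bounds.
split; first exact: gaussMI_le_gammaT.
have s_gt0 x : 0 < s x := (s_bounds x).1.
have c_le x : ln (1 + sigma ^- 2) <= (s x)^-2.
  apply: le_trans (le_ln1Dx _) _.
    by apply: lt_le_trans (ltrN10 R) _; rewrite invr_ge0 exprn_ge0 // ltW.
  rewrite lef_pV2 ?posrE ?exprn_gt0 // ler_pXn2r ?nnegrE //.
  - exact: (s_bounds x).2.
  - exact: ltW (s_gt0 x).
  - exact: ltW.
have [det_gt0 sum_le] :=
  ln_det_ge_sum_postvar L Sigma_sym Sigma_psd s_gt0 c_le (leqnn T).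
have sumE : \sum_(t < T) postvar Sigma s L t
           = \sum_(t < T | (t < T)%N) postvar Sigma s L t.
  by apply: eq_bigl => t; rewrite ltn_ord.
by rewrite gaussMIE ?infomx_full // sumE mulrAC ler_pM2r.
Qed.
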